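(* Let $k\ge 4$ be even, $1\le s\le k-1$, and let $G$ be a $k$-uniform $s$-cycle which is not regular. Then $G$ is odd-bipartite.
   Context: A $k$-uniform $s$-cycle with $m$ edges has vertex set $\mathbb{Z}_n$, $n=m(k-s)$ (vertex $n+i$ identified with $i$), and edges $e_j=\{j(k-s)+1,\ldots,j(k-s)+k\}$, $j=0,\ldots,m-1$; it is assumed that $n\ge 2k-s$. A hypergraph is regular if all vertex degrees (numbers of edges containing the vertex) are equal. A $k$-uniform hypergraph with $k$ even and vertex set $V$ is odd-bipartite if either it has no edges or there is a partition $V=V_1\cup V_2$ with $V_1,V_2\ne\emptyset$ such that every edge intersects $V_1$ in an odd number of vertices. *)

From mathcomp Require Import all_boot.
Set Implicit Arguments. Unset Strict Implicit. Unset Printing Implicit Defensive.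

Definition hdeg (V : finType) (E : {set {set V}}) (v : V) : nat :=
  #|[set e in E | v \in e]|.

Definition hregular (V : finType) (E : {set {set V}}) : Prop :=
  forall u v : V, hdeg E u = hdeg E v.

Definition kuniform (V : finType) (k : nat) (E : {set {set V}}) : Prop :=
  forall e, e \in E -> #|e| = k.

Definition odd_bipartite (V : finType) (E : {set {set V}}) : Prop :=
  E = set0 \/
  exists V1 : {set V}, [/\ V1 != set0, ~: V1 != set0 &
                           forall e, e \in E -> odd #|e :&: V1|].

(* vertex set Z_n, n = m(k-s); vertex x in Z is identified with x mod n *)
Definition scycle_n (k s m : nat) : nat := m * (k - s).

Definition scycle_edge (k s m j : nat) : {set 'I_(scycle_n k s m)} :=
  [set v : 'I_(scycle_n k s m) |
     [exists t : 'I_k, val v == (j * (k - s) + 1 + t) %% scycle_n k s m]].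

Definition scycle (k s m : nat) : {set {set 'I_(scycle_n k s m)}} :=
  [set scycle_edge k s m j | j : 'I_m].

From mathcomp Require Import all_boot zify.

(* Write d = k - s and n = m d, and measure vertices by their cyclic distance
   from a base point, so that e_j is the arc of length k starting at j d + 1.
   If d divides k, e_j is the union of k/d consecutive blocks of d vertices,
   and a vertex lies in e_j iff the cyclic distance modulo m from j to its
   block is below k/d; hence every vertex has degree min(m, k/d) and the
   s-cycle is regular.  Otherwise k = q d + r with 0 < r < d, every arc of
   length k meets the residue class of a + 1 modulo d in exactly q + [a < r]
   vertices, and a = d - 1 for q odd, a = 0 for q even makes this number odd. *)

Lemma card_count k (P : pred nat) : #|[set t : 'I_k | P t]| = count P (iota 0 k).
Proof.
have -> : iota 0 k = index_iota 0 k by rewrite /index_iota subn0.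
by rewrite -sum1_count big_mkord cardsE -sum1_card.
Qed.

Section CyclicDistance.

Variable n : nat.
Hypothesis n_gt0 : 0 < n.

Definition cdist (a v : nat) : nat := (v + (n - a %% n)) %% n.

Lemma cdist_lt a v : cdist a v < n.
Proof. exact: ltn_pmod. Qed.

Lemma addn_cdist a v : a + cdist a v = v %[mod n].
Proof.
have a_le := ltnW (ltn_pmod a n_gt0).
rewrite /cdist modnDmr.
have -> : a + (v + (n - a %% n)) = (a %/ n).+1 * n + v.
  by rewrite mulSn {1}(divn_eq a n); move: (a %/ n * n) a_le => x; lia.
by rewrite modnMDl.
Qed.

Lemma cdist_eq a v x : x < n -> a + x = v %[mod n] -> cdist a v = x.
Proof.
move=> x_lt eq_v; apply/eqP.
by rewrite -(modn_small (cdist_lt a v)) -(modn_small x_lt) -(eqn_modDl a) addn_cdist eq_v.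
Qed.

Lemma cdist_modn a v : cdist a (v %% n) = cdist a v.
Proof. by rewrite /cdist modnDml. Qed.

Lemma cdist_addr a t : t < n -> cdist a (a + t) = t.
Proof. by move=> t_lt; apply: cdist_eq. Qed.

Lemma cdistS a v : cdist a v.+1 = (cdist a v).+1 %% n.
Proof.
by apply: cdist_eq; rewrite ?ltn_pmod // modnDmr addnS -addn1 -modnDml addn_cdist modnDml addn1.
Qed.

Lemma cdist_addl a b v : cdist (a + b) v = cdist b (cdist a v).
Proof.
by apply: cdist_eq; rewrite ?cdist_lt // -addnA -modnDmr addn_cdist modnDmr addn_cdist.
Qed.

Lemma cdist_cdist a v : cdist (cdist a v) v = a %% n.
Proof. by apply: cdist_eq; rewrite ?ltn_pmod // modnDmr addnC addn_cdist. Qed.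

Definition arc (a k : nat) : {set 'I_n} := [set v : 'I_n | cdist a v < k].

Lemma arc_inj_mod a b k : 0 < k < n -> arc a k = arc b k -> a = b %[mod n].
Proof.
move=> /andP[k_gt0 k_lt] eq_arc.
have lt_cdist_eq v : (cdist a v < k) = (cdist b v < k).
  have : Ordinal (ltn_pmod v n_gt0) \in arc a k = (Ordinal (ltn_pmod v n_gt0) \in arc b k).
    by rewrite eq_arc.
  by rewrite !inE /= !cdist_modn.
(* From a + n.-1 to a + n the distance to a drops from n.-1 to 0, so the
   distance to b steps from >= k to < k, which forces it to wrap around. *)
set c := cdist b (a + n.-1).
have c_succ : cdist b (a + n) = c.+1 %% n by rewrite -cdistS -addnS prednK.
have k_le_c : k <= c by rewrite leqNgt -lt_cdist_eq cdist_addr; lia.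
have c_succ_lt : c.+1 %% n < k.
  by rewrite -c_succ -lt_cdist_eq (@cdist_eq a _ 0) // addn0 modnDr.
have c_last : c.+1 = n.
  have c_lt : c < n := cdist_lt b (a + n.-1).
  case: (ltngtP c.+1 n) => [c_small|c_big|//]; last by lia.
  by rewrite modn_small in c_succ_lt; lia.
by have := addn_cdist b (a + n); rewrite c_succ c_last modnn addn0 modnDr => ->.
Qed.

Lemma card_cdist_pred (P : pred nat) v :
  #|[set a : 'I_n | P (cdist a v)]| = #|[set a : 'I_n | P a]|.
Proof.
pose r (a : 'I_n) : 'I_n := Ordinal (cdist_lt a v).
have r_inv : involutive r by move=> a; apply: val_inj; rewrite /= cdist_cdist modn_small.
have -> : [set a : 'I_n | P (cdist a v)] = r @^-1: [set a : 'I_n | P a].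
  by apply/setP => a; rewrite !inE.
exact/card_preimset/inv_inj.
Qed.

Lemma card_arc_pred (P : pred nat) a k : k <= n ->
  #|arc a k :&: [set v : 'I_n | P v]| = count (fun t => P ((a + t) %% n)) (iota 0 k).
Proof.
move=> k_le.
pose f (t : 'I_k) : 'I_n := Ordinal (ltn_pmod (a + t) n_gt0).
have cdist_f t : cdist a (f t) = t.
  by rewrite cdist_modn cdist_addr // (leq_trans (ltn_ord t)).
have f_inj : injective f.
  by move=> t t' /(congr1 (cdist a \o val)); rewrite /= !cdist_f; apply: val_inj.
have -> : arc a k :&: [set v : 'I_n | P v] = f @: [set t : 'I_k | P ((a + t) %% n)].
  apply/setP => v; rewrite !inE; apply/andP/imsetP => [[v_arc Pv]|[t]].
    have v_eq : (a + cdist a v) %% n = v by rewrite addn_cdist modn_small.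
    by exists (Ordinal v_arc); [rewrite inE /= v_eq | apply: val_inj].
  by rewrite inE => Pt ->; rewrite cdist_f ltn_ord.
by rewrite card_imset // (card_count k (fun t => P ((a + t) %% n))).
Qed.

End CyclicDistance.

Lemma cdist_mulr_divn m d j w : 0 < d ->
  cdist (m * d) (j * d) w %/ d = cdist m j (w %/ d).
Proof.
move=> d_gt0; rewrite /cdist -muln_modl -mulnBl -modn_divl.
by rewrite divnDr ?dvdn_mull // mulnK.
Qed.

Lemma count_residue d a q r : a < d -> r <= d ->
  count (fun t => t %% d == a) (iota 0 (q * d + r)) = q + (a < r).
Proof.
move=> a_lt r_le.
have count_short r' : r' <= d -> count (fun t => t %% d == a) (iota 0 r') = (a < r').
  move=> r'_le; rewrite (@eq_in_count _ _ (pred1 a)) ?count_uniq_mem ?iota_uniq ?mem_iota //.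
  by move=> t; rewrite mem_iota => /andP[_ t_lt]; rewrite /= modn_small ?(leq_trans t_lt).
elim: q => [|q IHq]; first exact: count_short.
rewrite mulSn -addnA iotaD count_cat count_short // a_lt.
have -> : iota (0 + d) (q * d + r) = map (addn d) (iota 0 (q * d + r)).
  by rewrite add0n -iotaDl addn0.
rewrite count_map (eq_count (a2 := fun t => t %% d == a)) ?IHq //.
by move=> t /=; rewrite modnDl.
Qed.

Lemma hdeg_imset_inj (I V : finType) (f : I -> {set V}) v : injective f ->
  hdeg [set f i | i : I] v = #|[set i | v \in f i]|.
Proof.
move=> f_inj; rewrite /hdeg -(card_imset _ f_inj).
congr #|pred_of_set _|; apply/setP => e; rewrite inE.
apply/andP/imsetP => [[/imsetP[i _ ->] v_fi]|[i]]; first by exists i; rewrite ?inE.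
by rewrite inE => v_fi ->; rewrite imset_f.
Qed.

Section SCycle.

Variables k s m : nat.
Local Notation n := (scycle_n k s m).
Local Notation d := (k - s).
Hypothesis k_lt_n : k < n.

Let n_gt0 : 0 < n. Proof. exact: leq_ltn_trans k_lt_n. Qed.

Let m_gt0 : 0 < m. Proof. by move: n_gt0; rewrite muln_gt0 => /andP[]. Qed.

Let d_gt0 : 0 < d. Proof. by move: n_gt0; rewrite muln_gt0 => /andP[]. Qed.

Lemma scycle_edgeE j : scycle_edge k s m j = arc n (j * d + 1) k.
Proof.
apply/setP => v; rewrite !inE; apply/existsP/idP => [[t /eqP ->]|v_arc].
  by rewrite cdist_modn // cdist_addr // (ltn_trans (ltn_ord t)).
by exists (Ordinal v_arc); rewrite /= addn_cdist // modn_small.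
Qed.

Lemma scycle_edge_inj : injective (fun j : 'I_m => scycle_edge k s m j).
Proof.
have k_bounds : 0 < k < n by rewrite k_lt_n (leq_trans d_gt0 (leq_subr s k)).
move=> j j' /=; rewrite !scycle_edgeE => /(@arc_inj_mod _ n_gt0 _ _ _ k_bounds)/eqP.
rewrite eqn_modDr !modn_small ?ltn_pmul2r // eqn_pmul2r // => /eqP.
exact: val_inj.
Qed.

Lemma mem_scycle_edge_dvd j (v : 'I_n) : d %| k ->
  (v \in scycle_edge k s m j) = (cdist m j (cdist n 1 v %/ d) < k %/ d).
Proof.
move=> d_dvd_k; rewrite scycle_edgeE inE addnC cdist_addl //.
by rewrite -[X in _ < X = _](divnK d_dvd_k) -ltn_divLR // cdist_mulr_divn.
Qed.

Lemma hdeg_scycle_dvd v : d %| k -> hdeg (scycle k s m) v = #|[set j : 'I_m | j < k %/ d]|.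
Proof.
move=> d_dvd_k; rewrite hdeg_imset_inj; last exact: scycle_edge_inj.
rewrite -(card_cdist_pred _ m_gt0 (fun j => j < k %/ d) (cdist n 1 v %/ d)).
by congr #|pred_of_set _|; apply/setP => j; rewrite inE mem_scycle_edge_dvd // inE.
Qed.

Lemma card_scycle_edgeI_residue j a : a < d ->
  #|scycle_edge k s m j :&: [set v : 'I_n | v %% d == (a + 1) %% d]|
  = count (fun t => t %% d == a) (iota 0 k).
Proof.
move=> a_lt; rewrite scycle_edgeE.
rewrite (card_arc_pred _ n_gt0 (fun v => v %% d == (a + 1) %% d) (j * d + 1) k (ltnW k_lt_n)).
apply: eq_count => t /=; rewrite modn_dvdm ?dvdn_mull // -addnA modnMDl.
by rewrite addnC eqn_modDr (modn_small a_lt).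
Qed.

Lemma scycle_odd_bipartite : ~~ (d %| k) -> odd_bipartite (scycle k s m).
Proof.
move=> d_ndvd_k.
have d_gt1 : 1 < d.
  by rewrite ltn_neqAle d_gt0 andbT; apply: contraNneq d_ndvd_k => <-; exact: dvd1n.
have d_le_n : d <= n by rewrite leq_pmull.
have r_gt0 : 0 < k %% d by rewrite lt0n.
pose a := if odd (k %/ d) then d.-1 else 0.
have a_lt : a < d by rewrite /a; case: ifP; lia.
pose residue_vertex b : 'I_n := Ordinal (leq_trans (ltn_pmod b d_gt0) d_le_n).
right; exists [set v : 'I_n | v %% d == (a + 1) %% d]; split.
- by apply/set0Pn; exists (residue_vertex (a + 1)); rewrite inE /= modn_mod.
- apply/set0Pn; exists (residue_vertex (a + 1 + 1)); rewrite !inE /= modn_mod.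
  by rewrite -{2}[a + 1]addn0 eqn_modDl mod0n modn_small.
- move=> e /imsetP[j _ ->]; rewrite card_scycle_edgeI_residue //.
  have := @count_residue d a (k %/ d) _ a_lt (ltnW (ltn_pmod k d_gt0)).
  rewrite -divn_eq => ->.
  rewrite /a; case: ifP => q_odd; last by rewrite r_gt0 addn1 /= q_odd.
  by rewrite ltnNge -ltnS prednK ?ltn_pmod // addn0.
Qed.

End SCycle.

Theorem proposition4p2 (k s m : nat) :
  4 <= k -> ~~ odd k -> 1 <= s <= k - 1 ->
  2 * k - s <= scycle_n k s m ->
  ~ hregular (scycle k s m) ->
  odd_bipartite (scycle k s m).
Proof.
move=> k_ge4 _ s_bounds n_ge nonregular.
have k_lt_n : k < scycle_n k s m by lia.
have [d_dvd_k|d_ndvd_k] := boolP ((k - s) %| k); last exact: scycle_odd_bipartite.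
by case: nonregular => u v; rewrite !hdeg_scycle_dvd.
Qed.
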